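(* Let $G$ be a simple graph of order $n$ and let $m\ge 1$. Let $M$ be a maximum matching of $G$, $\alpha'(G)=|M|$, and let $l=n-2\alpha'(G)$ be the number of vertices of $G$ not covered by $M$. Then $s(G\circ \overline{K_m})=\alpha'(G)+l$. In particular, if $G$ has a perfect matching, then $s(G\circ\overline{K_m})=n/2$.
   Context: A matching in a graph is a set of edges no two of which share a vertex; it is maximal if it is not properly contained in another matching, and maximum if it has the largest possible size. $\alpha'(G)$ is the size of a maximum matching of $G$. The saturation number $s(G)$ is the minimum cardinality of a maximal matching of $G$. $\overline{K_m}$ is the edgeless graph on $m$ vertices. The corona $G_1\circ G_2$ of graphs $G_1$ and $G_2$ is obtained by taking one copy of $G_1$ and $|V(G_1)|$ disjoint copies of $G_2$, and joining the $i$-th vertex of $G_1$ by an edge to every vertex of the $i$-th copy of $G_2$. *)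

(* Simple graphs as symmetric irreflexive relations on a finType. *)
From mathcomp Require Import all_boot.
Set Implicit Arguments. Unset Strict Implicit. Unset Printing Implicit Defensive.

Section Graphs.
Variable T : finType.
Variable e : rel T.

Definition edges : {set {set T}} := 
  [set f : {set T} | [exists x : T, exists y : T, e x y && (f == [set x; y])]].

Definition matching (M : {set {set T}}) : bool :=
  (M \subset edges) && trivIset M.

Definition maximal_matching (M : {set {set T}}) : bool :=
  matching M && [forall M' : {set {set T}}, (matching M' && (M \subset M')) ==> (M' == M)].

Definition matching_number : nat := \max_(M : {set {set T}} | matching M) #|M|.

(* s(G): minimum size of a maximal matching (a maximal matching always exists,
   and its size is at most #|T|, so #|T| is a harmless neutral element). *)
Definition saturation_number : nat :=
  \big[minn/#|T|]_(M : {set {set T}} | maximal_matching M) #|M|.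

Definition perfect_matching (M : {set {set T}}) : bool :=
  matching M && (cover M == [set: T]).

End Graphs.

(* Corona G o (complement of K_m): vertices of G are inl x, the i-th vertex of
   the copy attached to x is inr (x, i). *)
Definition corona_rel (T : finType) (e : rel T) (m : nat) : rel (T + (T * 'I_m))%type :=
  fun u v =>
    match u, v with
    | inl x, inl y => e x y
    | inl x, inr (y, _) => x == y
    | inr (x, _), inl y => x == y
    | inr _, inr _ => false
    end.
Arguments corona_rel {T} e m _ _.

From HB Require Import structures.
From mathcomp Require Import all_boot zify.
Set Implicit Arguments. Unset Strict Implicit. Unset Printing Implicit Defensive.

(* In the corona every vertex x of G carries pendant vertices, so a maximal
   matching M must cover every vertex of G: otherwise a pendant edge at x could
   be added. An edge of M covers two vertices of G only if it is an edge of G,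
   and these edges form a matching of G; hence n <= |M| + alpha'(G).
   Conversely, a maximum matching of G together with one pendant edge at each of
   the l = n - 2 alpha'(G) vertices it leaves uncovered is a maximal matching of
   size alpha'(G) + l. *)

(* [minn] has no neutral element on [nat], but being associative and
   commutative is all [big_rem_AC] needs. *)
HB.instance Definition _ := SemiGroup.isComLaw.Build nat minn minnA minnC.

Lemma bigminn_le_cond (I : finType) (P : pred I) (F : I -> nat) idx i :
  P i -> \big[minn/idx]_(j | P j) F j <= F i.
Proof. by move=> Pi; rewrite (big_rem_AC _ _ _ _ (mem_index_enum i)) Pi geq_minl. Qed.

Lemma leq_bigminn (I : finType) (P : pred I) (F : I -> nat) idx k :
  k <= idx -> (forall i, P i -> k <= F i) -> k <= \big[minn/idx]_(i | P i) F i.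
Proof.
by move=> k_idx k_F; elim/big_ind: _ => // a b ka kb; rewrite leq_min ka kb.
Qed.

Lemma card_cover_setI (V : finType) (P : {set {set V}}) (A : {set V}) :
  trivIset P -> #|cover P :&: A| = \sum_(B in P) #|B :&: A|.
Proof.
move=> tiP; rewrite -sum1_card (eq_bigl (fun u => (u \in cover P) && (u \in A))).
  rewrite big_trivIset_cond //; apply: eq_bigr => B _.
  by rewrite -sum1_card; apply: eq_bigl => u; rewrite inE.
by move=> u; rewrite inE.
Qed.

Section Matchings.
Variables (V : finType) (r : rel V).

Lemma edgesP f : reflect (exists x y, r x y /\ f = [set x; y]) (f \in edges r).
Proof.
rewrite inE; apply: (iffP existsP) => [[x /existsP[y /andP[rxy /eqP ->]]]|].
  by exists x, y.
by case=> x [y [rxy ->]]; exists x; apply/existsP; exists y; rewrite rxy eqxx.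
Qed.

Lemma matching_edge M f : matching r M -> f \in M -> exists x y, r x y /\ f = [set x; y].
Proof. by case/andP=> /subsetP sME _ /sME /edgesP. Qed.

Lemma leq_card_matching_number M : matching r M -> #|M| <= matching_number r.
Proof. exact: (@leq_bigmax_cond _ (matching r)). Qed.

Lemma matching_number_witness :
  exists2 M, matching r M & #|M| = matching_number r.
Proof.
have set0_matching : matching r set0.
  by rewrite /matching sub0set /trivIset /cover !big_set0 cards0.
have [M mM max_M] := eq_bigmax_cond (fun M : {set {set V}} => #|M|)
  (introT card_gt0P (ex_intro _ set0 set0_matching)).
by exists M; rewrite // /matching_number -max_M.
Qed.

Lemma maximal_matchingP M : matching r M ->
  reflect (forall f, f \in edges r -> exists2 x, x \in f & x \in cover M)
          (maximal_matching r M).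
Proof.
move=> mM; have /andP[/subsetP sME tiM] := mM.
rewrite /maximal_matching mM; apply: (iffP forallP) => [maxM f fE|meetM M'].
  have [/eqP|/set0Pn[x /setIP[]]] := eqVneq (f :&: cover M) set0; last by exists x.
  rewrite setI_eq0 => f_cover.
  have M_set0 : set0 \notin M.
    by apply/negP => /(matching_edge mM)[x [y [_ /setP/(_ x)]]]; rewrite !inE eqxx.
  have [tiMf M_f] : trivIset (f |: M) /\ f \notin M.
    by apply: trivIsetU1 => // B BM; apply: disjointWr f_cover; apply: bigcup_sup.
  have mMf : matching r (f |: M).
    by rewrite /matching tiMf andbT; apply/subsetP => g /setU1P[->|/sME].
  by have := maxM (f |: M); rewrite mMf subsetUr => /eqP eqM; rewrite -eqM setU11 in M_f.
apply/implyP => /andP[/andP[/subsetP sM'E tiM'] sMM'].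
rewrite eqEsubset sMM' andbT; apply/subsetP => f M'f.
have [x fx /bigcupP[g Mg gx]] := meetM f (sM'E f M'f).
have [->//|neq_fg] := eqVneq f g.
have := trivIsetP tiM' f g M'f (subsetP sMM' g Mg) neq_fg.
by rewrite -setI_eq0 => /set0Pn[]; exists x; rewrite inE fx.
Qed.

Hypothesis r_irr : irreflexive r.

Lemma card_cover_matching M : matching r M -> #|cover M| = 2 * #|M|.
Proof.
move=> mM; have /andP[_ /eqP <-] := mM.
rewrite mulnC -sum_nat_const; apply: eq_bigr => f /(matching_edge mM)[x [y [rxy ->]]].
by rewrite cards2; case: eqVneq rxy => [->|]; rewrite ?r_irr.
Qed.

Lemma leq_double_card_matching M : matching r M -> 2 * #|M| <= #|V|.
Proof. by move/card_cover_matching <-; apply: max_card. Qed.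

Lemma leq_double_matching_number : 2 * matching_number r <= #|V|.
Proof. by have [M mM <-] := matching_number_witness; apply: leq_double_card_matching. Qed.

Lemma saturation_number_min M : maximal_matching r M ->
  (forall M', maximal_matching r M' -> #|M| <= #|M'|) -> saturation_number r = #|M|.
Proof.
move=> maxM min_M; apply/eqP; rewrite eqn_leq bigminn_le_cond //=.
apply: leq_bigminn min_M; have /andP[/leq_double_card_matching] := maxM; lia.
Qed.

End Matchings.

Lemma matching_imset (V W : finType) (r : rel V) (s : rel W) (h : V -> W) M :
  injective h -> {homo h : x y / r x y >-> s x y} ->
  matching r M -> matching s [set h @: (f : {set V}) | f in M].
Proof.
move=> h_inj h_hom /[dup] mM /andP[_ tiM]; rewrite /matching imset_trivIset // tiM andbT.
apply/subsetP => _ /imsetP[f /(matching_edge mM)[x [y [rxy ->]]] ->].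
by apply/edgesP; exists (h x), (h y); rewrite imsetU1 imset_set1 h_hom.
Qed.

Section Corona.
Variables (T : finType) (e : rel T) (m : nat).
Hypotheses (e_irr : irreflexive e) (m_pos : 0 < m).

Local Notation V := (T + T * 'I_m)%type.
Local Notation r := (corona_rel e m).
Local Notation inl := (@inl T (T * 'I_m)).
Local Notation inr := (@inr T (T * 'I_m)).

Definition host : {set V} := [set inl x | x : T].

Definition pendant (x : T) : {set V} := [set inl x; inr (x, Ordinal m_pos)].

Lemma corona_irr : irreflexive r.
Proof. by case=> [x|[x i]] //=; apply: e_irr. Qed.

Lemma card_host : #|host| = #|T|.
Proof. by rewrite card_imset //; apply: inl_inj. Qed.

Lemma inl_host x : inl x \in host.
Proof. exact: imset_f. Qed.

Lemma inr_host p : inr p \in host = false.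
Proof. by apply/imsetP => -[]. Qed.

Lemma pendant_edge x : pendant x \in edges r.
Proof. by apply/edgesP; exists (inl x), (inr (x, Ordinal m_pos)); split => /=. Qed.

Lemma edge_meets_host f : f \in edges r -> exists x, inl x \in f.
Proof.
case/edgesP => [[a|[a i]] [[b|[b j]] [rab ->]]] //=.
- by exists a; rewrite !inE eqxx.
- by exists a; rewrite !inE eqxx.
- by exists b; rewrite !inE eqxx orbT.
Qed.

Lemma edge_inr_inl f x i : f \in edges r -> inr (x, i) \in f -> inl x \in f.
Proof.
case/edgesP => [[a|[a i']] [[b|[b j]] [/= rab ->]]]; rewrite !inE //=.
- by move: rab => /eqP -> /eqP[->]; rewrite eqxx.
- by move: rab => /eqP -> /orP[/eqP[->]|//]; rewrite eqxx.
Qed.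

Lemma host_sub_cover M : maximal_matching r M -> host \subset cover M.
Proof.
move=> /[dup] maxM /andP[mM _]; have /andP[/subsetP sME _] := mM.
apply/subsetP => _ /imsetP[x _ ->].
have [u] := maximal_matchingP mM maxM _ (pendant_edge x).
rewrite !inE => /orP[/eqP -> //|/eqP ->] /bigcupP[g Mg gx].
by apply/bigcupP; exists g => //; apply: edge_inr_inl gx; apply: sME.
Qed.

Lemma card_edge_host f : f \in edges r -> #|f :&: host| <= 1 + (f \subset host).
Proof.
case/edgesP => u [v [ruv ->]]; case: (boolP (_ \subset host)) => [_|uv_host].
  apply: leq_trans (subset_leq_card (subsetIl _ _)) _.
  by rewrite cards2; case: (u != v).
have [w uv_w] : exists w, [set u; v] :&: host \subset [set w].
  move: ruv uv_host; case: u => [a|[a i]]; case: v => [b|[b j]] //= _.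
  - by rewrite subUset !sub1set !inl_host.
  - exists (inl a); apply/subsetP => w.
    by rewrite !inE => /andP[/orP[]/eqP-> //]; rewrite inr_host.
  - exists (inl b); apply/subsetP => w.
    by rewrite !inE => /andP[/orP[]/eqP-> //]; rewrite inr_host.
by rewrite addn0 -(cards1 w) subset_leq_card.
Qed.

Definition host_edges (M : {set {set V}}) : {set {set V}} :=
  [set f in M | f \subset host].

Definition host_part (M : {set {set V}}) : {set {set T}} :=
  [set inl @^-1: (f : {set V}) | f in host_edges M].

Lemma card_host_part M : #|host_part M| = #|host_edges M|.
Proof.
apply: card_in_imset => f g; rewrite !inE.
move=> /andP[_ /subsetP f_host] /andP[_ /subsetP g_host] /setP eq_fg.
apply/setP => -[a|p]; first by have := eq_fg a; rewrite !inE.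
by apply/idP/idP => [/f_host|/g_host]; rewrite inr_host.
Qed.

Lemma matching_host_part M : matching r M -> matching e (host_part M).
Proof.
move=> /[dup] mM /andP[_ /trivIsetP tiM]; apply/andP; split.
  apply/subsetP => h /imsetP[f /setIdP[/(matching_edge mM)[u [v [ruv ->]]]]].
  rewrite subUset !sub1set => /andP[/imsetP[a _ eq_u] /imsetP[b _ eq_v]] ->; subst u v.
  by apply/edgesP; exists a, b; split; last by apply/setP => x; rewrite !inE.
apply/trivIsetP => h1 h2 /imsetP[f /setIdP[Mf _] ->] /imsetP[g /setIdP[Mg _] ->] neq_fg.
have /tiM : f != g by apply: contraNneq neq_fg => ->.
by rewrite -!setI_eq0 -preimsetI => /(_ Mf Mg)/eqP->; rewrite preimset0.
Qed.

Lemma leq_card_maximal_corona M :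
  maximal_matching r M -> #|T| <= #|M| + matching_number e.
Proof.
move=> maxM; have /andP[mM _] := maxM; have /andP[/subsetP sME tiM] := mM.
have host_cover : #|T| = \sum_(f in M) #|f :&: host|.
  by rewrite -card_cover_setI // (setIidPr (host_sub_cover maxM)) card_host.
have edges_host : \sum_(f in M) #|f :&: host| <= #|M| + #|host_edges M|.
  apply: (@leq_trans (\sum_(f in M) (1 + (f \subset host)))).
    by apply: leq_sum => f /sME; apply: card_edge_host.
  rewrite big_split /= sum1_card leq_add2l -big_mkcondr -sum1_card.
  by apply: eq_leq; apply: eq_bigl => f; rewrite inE.
have := leq_card_matching_number (matching_host_part mM).
by rewrite card_host_part; lia.
Qed.

Lemma pendant_inj : injective pendant.
Proof. by move=> x y /setP/(_ (inl x)); rewrite !inE eqxx => /esym/orP[/eqP[]|]. Qed.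

Lemma inl_cover_pendants (X : {set T}) x :
  (inl x \in cover (pendant @: X)) = (x \in X).
Proof.
rewrite cover_imset; apply/bigcupP/idP => [[y Xy]|Xx]; last by exists x; rewrite ?setU11.
by rewrite !inE => /orP[/eqP[->]|].
Qed.

Lemma matching_pendants (X : {set T}) : matching r (pendant @: X).
Proof.
apply/andP; split; first by apply/subsetP => _ /imsetP[x _ ->]; apply: pendant_edge.
have base u x :
    u \in pendant x -> match u with Datatypes.inl y | Datatypes.inr (y, _) => y end = x.
  by rewrite !inE => /orP[]/eqP->.
apply/trivIsetP => _ _ /imsetP[x _ ->] /imsetP[y _ ->] neq_xy.
by rewrite -setI_eq0; apply: contraR neq_xy => /set0Pn[u /setIP[/base <- /base ->]].
Qed.

Definition host_copy (M0 : {set {set T}}) : {set {set V}} :=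
  [set inl @: (f : {set T}) | f in M0].

Definition corona_extension (M0 : {set {set T}}) : {set {set V}} :=
  host_copy M0 :|: pendant @: ~: cover M0.

Lemma cover_host_copy M0 : cover (host_copy M0) = inl @: cover M0.
Proof. by rewrite cover_imset imset_cover. Qed.

Lemma disjoint_host_copy_pendants M0 (X : {set T}) : [disjoint host_copy M0 & pendant @: X].
Proof.
rewrite -setI_eq0; apply/eqP/setP => f; rewrite !inE.
apply/negP => /andP[/imsetP[g _ ->] /imsetP[x _]] /setP/(_ (inr (x, Ordinal m_pos))).
by rewrite !inE eqxx orbT => /imsetP[].
Qed.

Section Extension.
Variable M0 : {set {set T}}.
Hypothesis mM0 : matching e M0.

Lemma matching_corona_extension : matching r (corona_extension M0).
Proof.
have /andP[sM1E tiM1] : matching r (host_copy M0) by exact: matching_imset inl_inj _ mM0.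
have /andP[sM2E tiM2] := matching_pendants (~: cover M0).
rewrite /matching subUset sM1E sM2E trivIsetU //.
rewrite cover_host_copy disjoints_subset; apply/subsetP => _ /imsetP[x M0x ->].
by rewrite inE inl_cover_pendants inE M0x.
Qed.

Lemma maximal_corona_extension : maximal_matching r (corona_extension M0).
Proof.
apply/(maximal_matchingP matching_corona_extension) => f /edge_meets_host[x fx].
exists (inl x) => //; rewrite /cover bigcup_setU -!/(cover _) inE cover_host_copy.
by rewrite (mem_imset _ _ inl_inj) inl_cover_pendants inE orbN.
Qed.

Lemma card_corona_extension : #|corona_extension M0| = #|T| - #|M0|.
Proof.
rewrite cardsU; have /eqP-> : host_copy M0 :&: (pendant @: ~: cover M0) == set0.
  by rewrite setI_eq0 disjoint_host_copy_pendants.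
rewrite cards0 subn0.
rewrite card_imset; last exact: imset_inj inl_inj.
rewrite card_imset; last exact: pendant_inj.
by rewrite -(cardsC (cover M0)) (card_cover_matching e_irr mM0) mul2n -addnn -addnA addKn.
Qed.

End Extension.

End Corona.

Theorem theorem2p2 (T : finType) (e : rel T) (m : nat)
    (e_sym : symmetric e) (e_irr : irreflexive e) (m_pos : 0 < m) :
  saturation_number (corona_rel e m)
    = matching_number e + (#|T| - 2 * matching_number e)
  /\ ((exists M : {set {set T}}, perfect_matching e M) ->
      saturation_number (corona_rel e m) = #|T| %/ 2).
Proof.
have alpha_le := leq_double_matching_number e_irr.
have sat : saturation_number (corona_rel e m) = #|T| - matching_number e.
  have [M0 mM0 card_M0] := matching_number_witness e.
  have := saturation_number_min (@corona_irr _ _ m e_irr)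
    (maximal_corona_extension m_pos mM0).
  rewrite (card_corona_extension e_irr m_pos mM0) card_M0; apply.
  by move=> M /(leq_card_maximal_corona m_pos); lia.
split; first by rewrite sat; lia.
case=> M /andP[mM /eqP cover_M].
have := card_cover_matching e_irr mM; have := leq_card_matching_number mM.
rewrite cover_M cardsT sat; lia.
Qed.
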